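(* Let $G$ and $H$ be graphs each having at least one edge. Then the join of $G$ and $H$ is well-bicovered if and only if each of $G$ and $H$ is both well-covered and well-bicovered, and $b(G)=b(H)=2\alpha(G)=2\alpha(H)$.
   Context: All graphs are finite and simple; ''subgraph'' means induced subgraph. $b(G)$ denotes the maximum order of an induced bipartite subgraph of $G$. A graph is well-bicovered if every vertex-inclusion-maximal induced bipartite subgraph has the same order (namely $b(G)$). A graph is well-covered if every maximal independent set has the same cardinality, namely the independence number $\alpha(G)$. The join of $G$ and $H$ is the disjoint union of $G$ and $H$ together with all edges between $V(G)$ and $V(H)$. *)

From mathcomp Require Import all_boot.
Set Implicit Arguments. Unset Strict Implicit. Unset Printing Implicit Defensive.

Definition simple_graph (T : finType) (e : rel T) : Prop :=
  symmetric e /\ irreflexive e.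

Definition has_edge (T : finType) (e : rel T) : Prop := exists x y, e x y.

Definition independent (T : finType) (e : rel T) (A : {set T}) : bool :=
  [forall x in A, forall y in A, ~~ e x y].

Definition ind_bipartite (T : finType) (e : rel T) (S : {set T}) : bool :=
  [exists A : {set T}, (A \subset S) && independent e A && independent e (S :\: A)].

Definition maximal_independent (T : finType) (e : rel T) (A : {set T}) : Prop :=
  maxset (independent e) A.

Definition maximal_bipartite (T : finType) (e : rel T) (S : {set T}) : Prop :=
  maxset (ind_bipartite e) S.

Definition alpha (T : finType) (e : rel T) : nat :=
  \max_(A : {set T} | independent e A) #|A|.

Definition bnum (T : finType) (e : rel T) : nat :=
  \max_(S : {set T} | ind_bipartite e S) #|S|.

Definition well_covered (T : finType) (e : rel T) : Prop :=
  forall A : {set T}, maximal_independent e A -> #|A| = alpha e.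

Definition well_bicovered (T : finType) (e : rel T) : Prop :=
  forall S : {set T}, maximal_bipartite e S -> #|S| = bnum e.

Definition join_rel (T1 T2 : finType) (e1 : rel T1) (e2 : rel T2) : rel (T1 + T2) :=
  fun u v => match u, v with
             | inl x, inl y => e1 x y
             | inr x, inr y => e2 x y
             | _, _ => true
             end.

(* A bipartite set of the join G + H is a union of two independent sets of the
   join, and an independent set of the join lies entirely in G or entirely in H.
   Hence a bipartite set of the join is a bipartite set of G, a bipartite set of
   H, or an independent set of G together with an independent set of H.  When G
   and H have edges, the maximal ones are exactly: the maximal bipartite sets of
   G, those of H (they are not independent, so they cannot be enlarged by a
   vertex of the other side), and the unions of a maximal independent set of G
   with one of H.  The join is well-bicovered iff all of these have the same
   size; comparing with b(G) <= 2 alpha(G) and b(H) <= 2 alpha(H) forces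
   b(G) = b(H) = alpha(G) + alpha(H) = 2 alpha(G) = 2 alpha(H). *)
From mathcomp Require Import all_boot.
From mathcomp Require Import zify.
Set Implicit Arguments. Unset Strict Implicit. Unset Printing Implicit Defensive.

Section MaxSet.
Variable T : finType.
Implicit Types (p : pred {set T}) (A : {set T}).

Lemma maxset_max_card p A : p A -> #|A| = \max_(B | p B) #|B| -> maxset p A.
Proof.
move=> pA cardA; apply/maxsetP; split=> // B pB sAB; apply/eqP.
by rewrite eq_sym eqEcard sAB cardA; apply: leq_bigmax_cond.
Qed.

Lemma exists_maxset_max_card p :
  p set0 -> exists2 A, maxset p A & #|A| = \max_(B | p B) #|B|.
Proof.
move=> p0; have [|A pA cardA] := @eq_bigmax_cond _ p (fun B => #|B|).
  by apply/card_gt0P; exists set0.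
by exists A => //; apply: maxset_max_card.
Qed.

Lemma maxset_card_const p n : p set0 -> (forall A, maxset p A -> #|A| = n) ->
  (forall A, maxset p A -> #|A| = \max_(B | p B) #|B|) /\ \max_(B | p B) #|B| = n.
Proof.
move=> p0 const; have [A /const cardA <-] := exists_maxset_max_card p0.
by split=> // B /const->.
Qed.

End MaxSet.

Section Graph.
Variables (T : finType) (e : rel T).
Implicit Types (A B S : {set T}).

Lemma independentP A :
  reflect (forall x y, x \in A -> y \in A -> ~~ e x y) (independent e A).
Proof.
apply: (iffP forall_inP) => [indA x y xA | indA x xA].
  by move/forall_inP: (indA x xA); apply.
by apply/forall_inP => y; apply: indA.
Qed.

Lemma independentS A B : A \subset B -> independent e B -> independent e A.
Proof.
move=> sAB /independentP indB; apply/independentP => x y xA yA.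
by apply: indB; apply: (subsetP sAB).
Qed.

Lemma independent0 : independent e set0.
Proof. by apply/independentP => x y; rewrite in_set0. Qed.

Lemma independent1 x : irreflexive e -> independent e [set x].
Proof.
by move=> irr; apply/independentP => y z /set1P-> /set1P->; rewrite irr.
Qed.

Lemma bipartite0 : ind_bipartite e set0.
Proof. by apply/existsP; exists set0; rewrite sub0set setDv independent0. Qed.

Lemma card_bipartite_le S : ind_bipartite e S -> #|S| <= 2 * alpha e.
Proof.
case/existsP=> A /andP[/andP[sAS indA] indSA].
rewrite -(cardsID A S) (setIidPr sAS) mul2n -addnn.
by rewrite leq_add // leq_bigmax_cond.
Qed.

Lemma bnum_le_double_alpha : bnum e <= 2 * alpha e.
Proof. by apply/bigmax_leqP => S; apply: card_bipartite_le. Qed.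

Lemma maxset_bipartite_not_independent S : irreflexive e -> has_edge e ->
  maxset (ind_bipartite e) S -> ~~ independent e S.
Proof.
move=> irr [x [y exy]] /maxsetP[_ maxS]; apply/negP => indS.
have inS z : z \in S.
  have bipzS : ind_bipartite e (z |: S).
    apply/existsP; exists S; rewrite subsetUr indS /=.
    by apply: independentS (independent1 z irr); rewrite setDUl setDv setU0 subsetDl.
  by rewrite -(maxS _ bipzS (subsetUr _ _)) setU11.
by move/independentP: indS => /(_ x y (inS x) (inS y)); rewrite exy.
Qed.

Lemma maxset_independent_neq0 (x : T) A : irreflexive e ->
  maxset (independent e) A -> A != set0.
Proof.
move=> irr /maxsetP[_ maxA]; apply/eqP => A0.
have := maxA _ (independent1 x irr); rewrite A0 sub0set => /(_ isT) /setP/(_ x).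
by rewrite !inE eqxx.
Qed.

End Graph.

Section SumSet.
Variables T1 T2 : finType.
Implicit Type S : {set T1 + T2}.

Definition sum_set (A1 : {set T1}) (A2 : {set T2}) : {set T1 + T2} :=
  [set x | match x with inl a => a \in A1 | inr b => b \in A2 end].
Definition lpart S : {set T1} := [set a | inl a \in S].
Definition rpart S : {set T2} := [set b | inr b \in S].

Lemma sum_set_parts S : S = sum_set (lpart S) (rpart S).
Proof. by apply/setP => -[a|b]; rewrite !inE. Qed.

Lemma sum_set_inj (A1 B1 : {set T1}) (A2 B2 : {set T2}) :
  sum_set A1 A2 = sum_set B1 B2 -> A1 = B1 /\ A2 = B2.
Proof.
by move/setP=> eqA; split; apply/setP=> x; [move: (eqA (inl x)) | move: (eqA (inr x))];
  rewrite !inE.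
Qed.

Lemma subset_sum_set (A1 B1 : {set T1}) (A2 B2 : {set T2}) :
  (sum_set A1 A2 \subset sum_set B1 B2) = (A1 \subset B1) && (A2 \subset B2).
Proof.
apply/subsetP/andP => [sA | [/subsetP sA1 /subsetP sA2] [a|b]]; rewrite ?inE.
- by split; apply/subsetP => x xA; [move: (sA (inl x)) | move: (sA (inr x))];
    rewrite !inE; apply.
- exact: sA1.
- exact: sA2.
Qed.

Lemma sum_setD (A1 B1 : {set T1}) (A2 B2 : {set T2}) :
  sum_set A1 A2 :\: sum_set B1 B2 = sum_set (A1 :\: B1) (A2 :\: B2).
Proof. by apply/setP => -[a|b]; rewrite !inE. Qed.

Lemma card_sum_set (A1 : {set T1}) (A2 : {set T2}) :
  #|sum_set A1 A2| = #|A1| + #|A2|.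
Proof.
have -> : sum_set A1 A2 = inl @: A1 :|: inr @: A2.
  apply/setP => -[a|b]; rewrite !inE ?(mem_imset _ _ inl_inj) ?(mem_imset _ _ inr_inj).
    by case: imsetP => [[]|]; rewrite ?orbF.
  by case: imsetP => [[]|].
rewrite -(card_imset (mem A1) (@inl_inj T1 T2)).
rewrite -(card_imset (mem A2) (@inr_inj T1 T2)) -cardsUI.
suff -> : inl @: A1 :&: inr @: A2 = set0 by rewrite cards0 addn0.
by apply/setP => x; rewrite !inE; apply/andP => -[/imsetP[a _ ->] /imsetP[b _]].
Qed.

Lemma maxset_sum_setP (p : pred {set T1 + T2}) (A1 : {set T1}) (A2 : {set T2}) :
  reflect (p (sum_set A1 A2) /\ forall B1 B2, p (sum_set B1 B2) ->
             A1 \subset B1 -> A2 \subset B2 -> B1 = A1 /\ B2 = A2)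
          (maxset p (sum_set A1 A2)).
Proof.
apply: (iffP maxsetP) => -[pA maxA]; split=> //.
  move=> B1 B2 pB sA1 sA2; apply: sum_set_inj; apply: maxA => //.
  by rewrite subset_sum_set sA1.
move=> B; rewrite [B]sum_set_parts subset_sum_set => pB /andP[sA1 sA2].
by case: (maxA _ _ pB sA1 sA2) => -> ->.
Qed.

End SumSet.

Section Join.
Variables (T1 T2 : finType) (e1 : rel T1) (e2 : rel T2).
Local Notation J := (join_rel e1 e2).

Lemma independent_join (A1 : {set T1}) (A2 : {set T2}) :
  independent J (sum_set A1 A2) =
  [&& independent e1 A1, independent e2 A2 & (A1 == set0) || (A2 == set0)].
Proof.
apply/independentP/and3P => [indA | [/independentP ind1 /independentP ind2 A0]].
  split; try apply/independentP => x y xA yA.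
  - by apply: (indA (inl x) (inl y)); rewrite inE.
  - by apply: (indA (inr x) (inr y)); rewrite inE.
  have [//|/set0Pn[a aA1]] := eqVneq A1 set0.
  have [//|/set0Pn[b bA2]] := eqVneq A2 set0.
  by have := indA (inl a) (inr b); rewrite !inE => /(_ aA1 bA2).
case/orP: A0 => /eqP A0 [x|x] [y|y]; rewrite !inE ?A0 ?inE //=;
  by [apply: ind1 | apply: ind2].
Qed.

Lemma bipartite_join (A1 : {set T1}) (A2 : {set T2}) :
  ind_bipartite J (sum_set A1 A2) =
  [|| (A2 == set0) && ind_bipartite e1 A1, (A1 == set0) && ind_bipartite e2 A2
    | independent e1 A1 && independent e2 A2].
Proof.
apply/existsP/or3P => [[W] | ].
  rewrite [W]sum_set_parts sum_setD subset_sum_set !independent_join.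
  set W1 := lpart W; set W2 := rpart W.
  case/andP=> /andP[/andP[sW1 sW2] /and3P[i1 i2 W0]] /and3P[j1 j2 D0].
  case/orP: W0 => /eqP W0; case/orP: D0 => /eqP D0.
  - rewrite W0 setD0 in D0; apply: Or32; rewrite D0 eqxx.
    by apply/existsP; exists W2; rewrite sW2 i2 j2.
  - rewrite W0 setD0 in j1; apply: Or33.
    by rewrite j1 (independentS _ i2) // -setD_eq0 D0.
  - rewrite W0 setD0 in j2; apply: Or33.
    by rewrite j2 (independentS _ i1) // -setD_eq0 D0.
  - rewrite W0 setD0 in D0; apply: Or31; rewrite D0 eqxx.
    by apply/existsP; exists W1; rewrite sW1 i1 j1.
case=> [/andP[/eqP-> /existsP[W /andP[/andP[sW iW] iD]]]
       |/andP[/eqP-> /existsP[W /andP[/andP[sW iW] iD]]]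
       |/andP[i1 i2]].
- exists (sum_set W set0).
  rewrite sum_setD subset_sum_set !independent_join setDv.
  by rewrite sW iW iD independent0 eqxx sub0set !orbT.
- exists (sum_set set0 W).
  rewrite sum_setD subset_sum_set !independent_join setDv.
  by rewrite sW iW iD independent0 eqxx sub0set.
exists (sum_set A1 set0).
rewrite sum_setD subset_sum_set !independent_join setDv setD0.
by rewrite subxx sub0set i1 i2 !independent0 !eqxx ?orbT.
Qed.

Lemma maxset_bipartite_join_inv (A1 : {set T1}) (A2 : {set T2}) :
  maxset (ind_bipartite J) (sum_set A1 A2) ->
  [\/ A2 = set0 /\ maxset (ind_bipartite e1) A1,
      A1 = set0 /\ maxset (ind_bipartite e2) A2
    | maxset (independent e1) A1 /\ maxset (independent e2) A2].
Proof.
case/maxset_sum_setP; rewrite bipartite_join.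
case/or3P=> [/andP[/eqP-> bip1] | /andP[/eqP-> bip2] | /andP[ind1 ind2]] maxA.
- apply: Or31; split=> //; apply/maxsetP; split=> // B bipB sAB.
  by case: (maxA B set0 _ sAB (subxx _)); rewrite // bipartite_join eqxx bipB.
- apply: Or32; split=> //; apply/maxsetP; split=> // B bipB sAB.
  by case: (maxA set0 B _ (subxx _) sAB); rewrite // bipartite_join eqxx bipB orbT.
apply: Or33; split; apply/maxsetP; split=> // B indB sAB.
  by case: (maxA B A2 _ sAB (subxx _)); rewrite // bipartite_join indB ind2 !orbT.
by case: (maxA A1 B _ (subxx _) sAB); rewrite // bipartite_join ind1 indB !orbT.
Qed.

Hypotheses (irr1 : irreflexive e1) (irr2 : irreflexive e2).
Hypotheses (edge1 : has_edge e1) (edge2 : has_edge e2).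

Lemma maxset_bipartite_join_l (A : {set T1}) :
  maxset (ind_bipartite e1) A -> maxset (ind_bipartite J) (sum_set A set0).
Proof.
move=> maxA; have notindA := maxset_bipartite_not_independent irr1 edge1 maxA.
case/maxsetP: maxA => bipA maxA; apply/maxset_sum_setP.
split=> [|B1 B2]; first by rewrite bipartite_join eqxx bipA.
rewrite bipartite_join => /or3P[/andP[/eqP-> bipB] | /andP[/eqP-> _] | /andP[indB _]] sAB _.
- by rewrite (maxA _ bipB sAB).
- by move: sAB notindA; rewrite subset0 => /eqP->; rewrite independent0.
- by rewrite (independentS sAB indB) in notindA.
Qed.

Lemma maxset_bipartite_join_r (A : {set T2}) :
  maxset (ind_bipartite e2) A -> maxset (ind_bipartite J) (sum_set set0 A).
Proof.
move=> maxA; have notindA := maxset_bipartite_not_independent irr2 edge2 maxA.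
case/maxsetP: maxA => bipA maxA; apply/maxset_sum_setP.
split=> [|B1 B2]; first by rewrite bipartite_join eqxx bipA orbT.
rewrite bipartite_join => /or3P[/andP[/eqP-> _] | /andP[/eqP-> bipB] | /andP[_ indB]] _ sAB.
- by move: sAB notindA; rewrite subset0 => /eqP->; rewrite independent0.
- by rewrite (maxA _ bipB sAB).
- by rewrite (independentS sAB indB) in notindA.
Qed.

Lemma maxset_bipartite_join_independent (A1 : {set T1}) (A2 : {set T2}) :
  maxset (independent e1) A1 -> maxset (independent e2) A2 ->
  maxset (ind_bipartite J) (sum_set A1 A2).
Proof.
have [[x1 _] [x2 _]] := (edge1, edge2).
move=> max1 max2; have A1n0 := maxset_independent_neq0 x1 irr1 max1.
have A2n0 := maxset_independent_neq0 x2 irr2 max2.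
case/maxsetP: max1 => ind1 max1; case/maxsetP: max2 => ind2 max2.
apply/maxset_sum_setP; split=> [|B1 B2]; first by rewrite bipartite_join ind1 ind2 !orbT.
rewrite bipartite_join.
case/or3P=> [/andP[/eqP-> _] | /andP[/eqP-> _] | /andP[indB1 indB2]] sA1 sA2.
- by rewrite subset0 (negbTE A2n0) in sA2.
- by rewrite subset0 (negbTE A1n0) in sA1.
- by rewrite (max1 _ indB1 sA1) (max2 _ indB2 sA2).
Qed.

Lemma maxset_bipartite_join_card n :
  (forall S, maxset (ind_bipartite J) S -> #|S| = n) <->
  [/\ forall A, maxset (ind_bipartite e1) A -> #|A| = n,
      forall A, maxset (ind_bipartite e2) A -> #|A| = n
    & forall A1 A2, maxset (independent e1) A1 -> maxset (independent e2) A2 ->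
        #|A1| + #|A2| = n].
Proof.
split=> [cardJ | [card1 card2 card12] S].
  split=> [A /maxset_bipartite_join_l | A /maxset_bipartite_join_r
          | A1 A2 max1 /(maxset_bipartite_join_independent max1)];
    by move/cardJ; rewrite card_sum_set ?cards0 ?addn0.
rewrite [S]sum_set_parts card_sum_set.
by case/maxset_bipartite_join_inv=> [[-> /card1] | [-> /card2] | [/card12]];
  rewrite ?cards0 ?addn0 //; apply.
Qed.

End Join.

Theorem mainTheorem2 (T1 T2 : finType) (e1 : rel T1) (e2 : rel T2) :
  simple_graph e1 -> simple_graph e2 ->
  has_edge e1 -> has_edge e2 ->
  (well_bicovered (join_rel e1 e2) <->
   [/\ well_covered e1, well_bicovered e1, well_covered e2, well_bicovered e2
     & [/\ bnum e1 = bnum e2, bnum e2 = 2 * alpha e1 & 2 * alpha e1 = 2 * alpha e2]]).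
Proof.
move=> [_ irr1] [_ irr2] edge1 edge2.
have cardJ := maxset_bipartite_join_card irr1 irr2 edge1 edge2.
split=> [wbJ | [wc1 wb1 wc2 wb2 [eb12 eb2 ea12]]].
  have [card1 card2 card12] := (cardJ _).1 wbJ.
  have [wb1 eb1] := maxset_card_const (bipartite0 e1) card1.
  have [wb2 eb2] := maxset_card_const (bipartite0 e2) card2.
  have [I1 maxI1 cardI1] := exists_maxset_max_card (independent0 e1).
  have [I2 maxI2 cardI2] := exists_maxset_max_card (independent0 e2).
  have ea := card12 _ _ maxI1 maxI2; rewrite cardI1 cardI2 in ea.
  have wc1 : well_covered e1.
    by move=> A /card12/(_ maxI2); rewrite cardI2 -ea => /addIn.
  have wc2 : well_covered e2.
    by move=> A /(card12 _ _ maxI1); rewrite cardI1 -ea => /addnI.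
  rewrite -/(bnum e1) -/(bnum e2) -/(alpha e1) -/(alpha e2) in eb1 eb2 ea.
  have le1 := bnum_le_double_alpha e1; have le2 := bnum_le_double_alpha e2.
  by split=> //; split; lia.
suff cardJ1 : forall S, maxset (ind_bipartite (join_rel e1 e2)) S -> #|S| = bnum e1.
  by have [] := maxset_card_const (bipartite0 _) cardJ1.
apply/cardJ; split=> // [A /wb2 | A1 A2 /wc1-> /wc2->]; [by rewrite eb12 | lia].
Qed.
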